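(* Let $h>0$, $P\ge 0$, $0<\zeta\le 1$, $\sigma_A^2\ge 0$, $\sigma_{\rm cov}^2>0$, $P_S>0$, let $N\ge1$ be an integer, and let $\mathcal{A}_N=\{0,1/N,2/N,\dots,1\}$. With $f(\rho)=\log_2\!\left(1+\frac{(1-\rho)hP}{(1-\rho)\sigma_A^2+\sigma_{\rm cov}^2}\right)$ for $\rho\in[0,1]$, define the DPS region with circuit power $$\mathcal{C}^{\rm DPS'}(P)=\bigcup_{\alpha\in\mathcal{A}_N}\ \bigcup_{\boldsymbol\rho\in[0,1]^N}\Big\{(R,Q):\ 0\le Q\le \tfrac1N\Big(\sum_{k=1}^N\rho_k\zeta hP-\sum_{k=\alpha N+1}^{N}P_S\Big),\ \ R\le \tfrac1N\sum_{k=\alpha N+1}^N f(\rho_k)\Big\}$$ and the on-off power splitting (OPS) region with circuit power $$\mathcal{C}^{\rm OPS'}(P)=\bigcup_{\alpha\in\mathcal{A}_N}\ \bigcup_{\rho\in[0,1]}\Big\{(R,Q):\ 0\le Q\le \alpha\zeta hP+(1-\alpha)\rho\zeta hP-(1-\alpha)P_S,\ \ R\le (1-\alpha)f(\rho)\Big\}.$$ Then $\mathcal{C}^{\rm DPS'}(P)=\mathcal{C}^{\rm OPS'}(P)$ for every $P\ge0$.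
   Context: Model of a separated receiver with information-decoding circuit power $P_S$: in a block of $N$ symbols, the information decoder is switched off for the first $\alpha N$ symbols and on (consuming power $P_S$ per symbol) for the remaining $(1-\alpha)N$ symbols; in symbol $k$ a fraction $\rho_k$ of the received power $hP$ is harvested with efficiency $\zeta$ and the fraction $1-\rho_k$ is used for decoding with rate $f(\rho_k)$ when the decoder is on. $\sigma_A^2$ is antenna noise power, $\sigma_{\rm cov}^2$ is conversion noise power. OPS is the special case $\rho_k=1$ for $k\le\alpha N$ and $\rho_k=\rho$ for $k>\alpha N$. *)

From Stdlib Require Import Reals Lra.
Open Scope R_scope.

Definition log2 (x : R) : R := ln x / ln 2.

Definition frate (h P sA2 scov2 rho : R) : R :=
  log2 (1 + (1 - rho) * h * P / ((1 - rho) * sA2 + scov2)).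

(* sumk a b g = sum_{k=a+1}^{b} g k  (empty, i.e. 0, if b <= a) *)
Fixpoint sumk (a b : nat) (g : nat -> R) : R :=
  match b with
  | O => 0
  | S b' => if Nat.leb (S b') a then 0 else sumk a b' g + g (S b')
  end.

(* DPS region with circuit power; alpha = m/N with m in {0..N}, so alpha*N = m. *)
Definition C_DPS' (N : nat) (h P zeta sA2 scov2 PS : R) (RQ : R * R) : Prop :=
  let '(Rr, Q) := RQ in
  exists m : nat, (m <= N)%nat /\
  exists rho : nat -> R,
    (forall k, (1 <= k <= N)%nat -> 0 <= rho k <= 1) /\
    0 <= Q /\
    Q <= / INR N * (sumk 0 N (fun k => rho k * zeta * h * P) - sumk m N (fun _ => PS)) /\
    Rr <= / INR N * sumk m N (fun k => frate h P sA2 scov2 (rho k)).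

Definition C_OPS' (N : nat) (h P zeta sA2 scov2 PS : R) (RQ : R * R) : Prop :=
  let '(Rr, Q) := RQ in
  exists m : nat, (m <= N)%nat /\
  let alpha := INR m / INR N in
  exists rho : R, 0 <= rho <= 1 /\
    0 <= Q /\
    Q <= alpha * zeta * h * P + (1 - alpha) * rho * zeta * h * P - (1 - alpha) * PS /\
    Rr <= (1 - alpha) * frate h P sA2 scov2 rho.

From Stdlib Require Import Reals Lra Lia Psatz.
Open Scope R_scope.

(* OPS is the special case of DPS in which the splitting ratio equals 1 on the
   first m symbols and a constant rho on the last N - m, so OPS ⊆ DPS is a
   direct computation of the two finite sums.  For DPS ⊆ OPS we keep the same
   switching point m and replace the ratios rho_{m+1..N} by their average:
   - harvested energy is unchanged on the decoding symbols and can only grow on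
     the first m symbols (where rho_k <= 1 is raised to 1);
   - the rate rho |-> f(rho) is concave on [0,1], so by Jensen's inequality the
     average rate is at most the rate of the average ratio. *)

Lemma sumk_empty a b g : (b <= a)%nat -> sumk a b g = 0.
Proof.
  destruct b as [|b]; [reflexivity|]; intro Hba.
  change (sumk a (S b) g) with (if Nat.leb (S b) a then 0 else sumk a b g + g (S b)).
  destruct (Nat.leb_spec (S b) a); [reflexivity | lia].
Qed.

Lemma sumk_S a b g : (a <= b)%nat -> sumk a (S b) g = sumk a b g + g (S b).
Proof.
  intro Hab.
  change (sumk a (S b) g) with (if Nat.leb (S b) a then 0 else sumk a b g + g (S b)).
  destruct (Nat.leb_spec (S b) a); [lia | reflexivity].
Qed.

Lemma sumk_range_ind (Q : nat -> Prop) a :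
  Q a -> (forall b, (a <= b)%nat -> Q b -> Q (S b)) ->
  forall b, (a <= b)%nat -> Q b.
Proof.
  intros Qa QS b Hab; replace b with (a + (b - a))%nat by lia.
  induction (b - a)%nat as [|d IH]; [now rewrite Nat.add_0_r|].
  replace (a + S d)%nat with (S (a + d)) by lia; apply QS; [lia | exact IH].
Qed.

Lemma sumk_le a b g1 g2 : (forall k, (a < k <= b)%nat -> g1 k <= g2 k) ->
  sumk a b g1 <= sumk a b g2.
Proof.
  intro Hle; destruct (Nat.le_gt_cases a b) as [Hab | Hba].
  2: rewrite !sumk_empty by lia; lra.
  revert Hle; pattern b; apply (sumk_range_ind _ a); auto.
  - intros _; rewrite !sumk_empty by lia; lra.
  - intros c Hac IH Hle; rewrite !sumk_S by lia.
    assert (g1 (S c) <= g2 (S c)) by (apply Hle; lia).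
    assert (sumk a c g1 <= sumk a c g2) by (apply IH; intros k Hk; apply Hle; lia).
    lra.
Qed.

Lemma sumk_ext a b g1 g2 : (forall k, (a < k <= b)%nat -> g1 k = g2 k) ->
  sumk a b g1 = sumk a b g2.
Proof.
  intro Heq; apply Rle_antisym; apply sumk_le; intros k Hk; rewrite Heq by lia; lra.
Qed.

Lemma sumk_affine a b u v g : (a <= b)%nat ->
  sumk a b (fun k => u + v * g k) = INR (b - a) * u + v * sumk a b g.
Proof.
  intro Hab; pattern b; apply (sumk_range_ind _ a); [| | exact Hab].
  - rewrite Nat.sub_diag, !sumk_empty by lia; simpl; ring.
  - intros c Hac IH; rewrite !sumk_S, IH by lia.
    rewrite Nat.sub_succ_l, S_INR by lia; ring.
Qed.

Lemma sumk_const a b c : (a <= b)%nat -> sumk a b (fun _ => c) = INR (b - a) * c.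
Proof.
  intro Hab; rewrite (sumk_ext a b _ (fun k => c + 0 * (fun _ => 0) k)) by (intros; ring).
  rewrite sumk_affine by exact Hab; ring.
Qed.

Lemma sumk_scal a b v g : (a <= b)%nat -> sumk a b (fun k => v * g k) = v * sumk a b g.
Proof.
  intro Hab; rewrite (sumk_ext a b _ (fun k => 0 + v * g k)) by (intros; ring).
  rewrite sumk_affine by exact Hab; ring.
Qed.

Lemma sumk_split a b c g : (a <= b)%nat -> (b <= c)%nat ->
  sumk a c g = sumk a b g + sumk b c g.
Proof.
  intros Hab Hbc; pattern c; apply (sumk_range_ind _ b); [| | exact Hbc].
  - rewrite (sumk_empty b b) by lia; ring.
  - intros d Hbd IH; rewrite !sumk_S, IH by lia; ring.
Qed.

(* Average of g over the range (a, b]; by the convention / 0 = 0 it is 0 on an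
   empty range, which lets both inclusions avoid a case split on m = N. *)
Definition avgk (a b : nat) (g : nat -> R) : R := sumk a b g / INR (b - a).

Lemma sumk_avgk a b g : (a <= b)%nat -> sumk a b g = INR (b - a) * avgk a b g.
Proof.
  intro Hab; unfold avgk; destruct (Nat.eq_dec a b) as [<- | Hne].
  - rewrite Nat.sub_diag, sumk_empty by lia; simpl; ring.
  - assert (0 < INR (b - a)) by (apply lt_0_INR; lia); field; lra.
Qed.

Lemma avgk_unit a b g : (a <= b)%nat ->
  (forall k, (a < k <= b)%nat -> 0 <= g k <= 1) -> 0 <= avgk a b g <= 1.
Proof.
  intros Hab Hg; unfold avgk.
  assert (Hlo : 0 <= sumk a b g).
  { rewrite <- (Rmult_0_r (INR (b - a))), <- sumk_const by exact Hab.
    apply sumk_le; intros k Hk; apply Hg; lia. }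
  assert (Hhi : sumk a b g <= INR (b - a)).
  { rewrite <- (Rmult_1_r (INR (b - a))), <- sumk_const by exact Hab.
    apply sumk_le; intros k Hk; apply Hg; lia. }
  destruct (Nat.eq_dec a b) as [<- | Hne].
  - rewrite Nat.sub_diag; unfold Rdiv; simpl INR; rewrite Rinv_0; lra.
  - assert (0 < INR (b - a)) by (apply lt_0_INR; lia).
    split; [apply Rle_mult_inv_pos; lra|].
    apply Rmult_le_reg_r with (INR (b - a)); [lra|].
    unfold Rdiv; rewrite Rmult_assoc, Rinv_l; lra.
Qed.

Lemma sumk_jensen (phi : R -> R) a b g :
  (forall x, 0 <= x <= 1 ->
     exists T, forall r, 0 <= r <= 1 -> phi r <= phi x + T * (r - x)) ->
  (a <= b)%nat -> (forall k, (a < k <= b)%nat -> 0 <= g k <= 1) ->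
  sumk a b (fun k => phi (g k)) <= INR (b - a) * phi (avgk a b g).
Proof.
  intros Hsupport Hab Hg.
  destruct (Hsupport (avgk a b g) (avgk_unit a b g Hab Hg)) as [T HT].
  apply Rle_trans with
    (sumk a b (fun k => (phi (avgk a b g) - T * avgk a b g) + T * g k)).
  - apply sumk_le; intros k Hk.
    specialize (HT (g k) (Hg k Hk)); lra.
  - rewrite sumk_affine, (sumk_avgk a b g) by exact Hab; right; ring.
Qed.

Lemma ln_le_sub1 u : 0 < u -> ln u <= u - 1.
Proof.
  intro Hu; pose proof (exp_ineq1_le (ln u)) as Hexp.
  rewrite exp_ln in Hexp by exact Hu; lra.
Qed.

(* Supporting (tangent) line of y |-> ln (1 + y a / (y b + c)) at x, for y >= 0:
   the map is concave since y a / (y b + c) is concave and ln is concave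
   increasing.  The slope is the derivative a c / (x b + c)^2 / (1 + g x). *)
Lemma ln_snr_tangent a b c x y : 0 <= a -> 0 <= b -> 0 < c -> 0 <= x -> 0 <= y ->
  ln (1 + y * a / (y * b + c)) <=
  ln (1 + x * a / (x * b + c))
  + (a * c / ((x * b + c) * (x * b + c)) / (1 + x * a / (x * b + c))) * (y - x).
Proof.
  intros Ha Hb Hc Hx Hy.
  assert (Dx : 0 < x * b + c) by nra.
  assert (Dy : 0 < y * b + c) by nra.
  set (gx := x * a / (x * b + c)); set (gy := y * a / (y * b + c)).
  set (slope := a * c / ((x * b + c) * (x * b + c))).
  assert (Gx : 0 <= gx) by (apply Rle_mult_inv_pos; nra).
  assert (Gy : 0 <= gy) by (apply Rle_mult_inv_pos; nra).
  (* the fraction lies below its own tangent line: it is concave in y *)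
  assert (Hgap : gy - gx - slope * (y - x) =
     - (a * b * c * ((y - x) * (y - x))) / ((y * b + c) * ((x * b + c) * (x * b + c))))
    by (unfold gx, gy, slope; field; lra).
  assert (Hchord : gy - gx <= slope * (y - x)).
  { assert (0 <= (a * b * c * ((y - x) * (y - x)))
                 / ((y * b + c) * ((x * b + c) * (x * b + c)))).
    { apply Rle_mult_inv_pos; [|apply Rmult_lt_0_compat; nra].
      apply Rmult_le_pos; [apply Rmult_le_pos; [apply Rmult_le_pos|] | apply Rle_0_sqr]; lra. }
    lra. }
  assert (Hsplit : ln (1 + gy) = ln (1 + gx) + ln ((1 + gy) / (1 + gx))).
  { rewrite <- ln_mult by (try apply Rdiv_lt_0_compat; lra).
    f_equal; field; lra. }
  assert (Hq : (1 + gy) / (1 + gx) - 1 <= slope / (1 + gx) * (y - x)).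
  { replace ((1 + gy) / (1 + gx) - 1) with ((gy - gx) / (1 + gx)) by (field; lra).
    replace (slope / (1 + gx) * (y - x)) with (slope * (y - x) / (1 + gx)) by (field; lra).
    apply Rmult_le_compat_r; [apply Rlt_le, Rinv_0_lt_compat; lra | exact Hchord]. }
  pose proof (ln_le_sub1 ((1 + gy) / (1 + gx)) ltac:(apply Rdiv_lt_0_compat; lra)).
  lra.
Qed.

Lemma frate_supporting_line h P sA2 scov2 x :
  0 <= h -> 0 <= P -> 0 <= sA2 -> 0 < scov2 -> 0 <= x <= 1 ->
  exists T, forall r, 0 <= r <= 1 ->
    frate h P sA2 scov2 r <= frate h P sA2 scov2 x + T * (r - x).
Proof.
  intros Hh HP HA Hc Hx.
  set (K := h * P * scov2 / (((1 - x) * sA2 + scov2) * ((1 - x) * sA2 + scov2))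
            / (1 + (1 - x) * (h * P) / ((1 - x) * sA2 + scov2))).
  exists (- K / ln 2); intros r Hr.
  pose proof (ln_snr_tangent (h * P) sA2 scov2 (1 - x) (1 - r)
                ltac:(nra) HA Hc ltac:(lra) ltac:(lra)) as Htan.
  fold K in Htan.
  pose proof ln_lt_2 as Hln2.
  unfold frate, log2; rewrite !Rmult_assoc with (r1 := (1 - _)).
  apply Rle_trans with
    ((ln (1 + (1 - x) * (h * P) / ((1 - x) * sA2 + scov2)) + K * (1 - r - (1 - x))) / ln 2).
  - apply Rmult_le_compat_r; [apply Rlt_le, Rinv_0_lt_compat; lra | exact Htan].
  - right; field; lra.
Qed.

Lemma DPS_sub_OPS (h zeta sA2 scov2 PS : R) (N : nat) P RQ :
  0 < h -> 0 < zeta -> 0 <= sA2 -> 0 < scov2 -> (1 <= N)%nat -> 0 <= P ->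
  C_DPS' N h P zeta sA2 scov2 PS RQ -> C_OPS' N h P zeta sA2 scov2 PS RQ.
Proof.
  destruct RQ as [Rr Q]; intros Hh Hz HA Hc HN HP [m [HmN [rho [Hrho [HQ0 [HQ HR]]]]]].
  assert (HNpos : 0 < INR N) by (apply lt_0_INR; lia).
  assert (HNm : INR (N - m) = INR N - INR m) by (apply minus_INR; lia).
  assert (He : 0 <= zeta * h * P) by (apply Rmult_le_pos; nra).
  set (rb := avgk m N rho).
  assert (Hhead : sumk 0 m (fun k => rho k * zeta * h * P) <= INR m * (zeta * h * P)).
  { replace (INR m) with (INR (m - 0)) by (f_equal; lia).
    rewrite <- sumk_const by lia; apply sumk_le; intros k Hk.
    specialize (Hrho k ltac:(lia)); nra. }
  assert (Htail : sumk m N (fun k => rho k * zeta * h * P) = INR (N - m) * rb * (zeta * h * P)).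
  { rewrite (sumk_ext m N _ (fun k => (zeta * h * P) * rho k)) by (intros; ring).
    rewrite sumk_scal, sumk_avgk by lia; fold rb; ring. }
  assert (Hrate : sumk m N (fun k => frate h P sA2 scov2 (rho k))
                  <= INR (N - m) * frate h P sA2 scov2 rb).
  { apply sumk_jensen; [|lia|intros k Hk; apply Hrho; lia].
    intros x Hx; apply frate_supporting_line; lra. }
  exists m; split; [exact HmN|].
  exists rb; split; [apply avgk_unit; [lia | intros k Hk; apply Hrho; lia]|].
  split; [exact HQ0|]; split.
  - apply Rle_trans with (1 := HQ).
    rewrite (sumk_split 0 m N), Htail, sumk_const by lia.
    apply Rle_trans with (/ INR N * (INR m * (zeta * h * P)
        + INR (N - m) * rb * (zeta * h * P) - INR (N - m) * PS)).
    + apply Rmult_le_compat_l; [apply Rlt_le, Rinv_0_lt_compat|]; lra.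
    + rewrite HNm; right; field; lra.
  - apply Rle_trans with (1 := HR).
    apply Rle_trans with (/ INR N * (INR (N - m) * frate h P sA2 scov2 rb)).
    + apply Rmult_le_compat_l; [apply Rlt_le, Rinv_0_lt_compat; lra | exact Hrate].
    + rewrite HNm; right; field; lra.
Qed.

Definition ops_profile (m : nat) (r : R) (k : nat) : R :=
  if Nat.leb k m then 1 else r.

Lemma OPS_sub_DPS (h zeta sA2 scov2 PS : R) (N : nat) P RQ :
  (1 <= N)%nat ->
  C_OPS' N h P zeta sA2 scov2 PS RQ -> C_DPS' N h P zeta sA2 scov2 PS RQ.
Proof.
  destruct RQ as [Rr Q]; intros HN [m [HmN [r [Hr [HQ0 [HQ HR]]]]]].
  assert (HNpos : 0 < INR N) by (apply lt_0_INR; lia).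
  assert (HNm : INR (N - m) = INR N - INR m) by (apply minus_INR; lia).
  assert (Hoff : forall k, (k <= m)%nat -> ops_profile m r k = 1)
    by (intros k Hk; unfold ops_profile; destruct (Nat.leb_spec k m); [reflexivity | lia]).
  assert (Hon : forall k, (m < k)%nat -> ops_profile m r k = r)
    by (intros k Hk; unfold ops_profile; destruct (Nat.leb_spec k m); [lia | reflexivity]).
  exists m; split; [exact HmN|]; exists (ops_profile m r); split.
  { intros k _; unfold ops_profile; destruct (Nat.leb k m); lra. }
  split; [exact HQ0|]; split.
  - rewrite (sumk_split 0 m N) by lia.
    rewrite (sumk_ext 0 m _ (fun _ => zeta * h * P))
      by (intros k Hk; rewrite Hoff by lia; ring).
    rewrite (sumk_ext m N _ (fun _ => r * zeta * h * P))
      by (intros k Hk; rewrite Hon by lia; ring).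
    rewrite !sumk_const, HNm, Nat.sub_0_r by lia.
    apply Rle_trans with (1 := HQ); right; field; lra.
  - rewrite (sumk_ext m N _ (fun _ => frate h P sA2 scov2 r))
      by (intros k Hk; rewrite Hon by lia; reflexivity).
    rewrite sumk_const, HNm by lia.
    apply Rle_trans with (1 := HR); right; field; lra.
Qed.

Theorem proposition2 (h zeta sA2 scov2 PS : R) (N : nat)
  (hh : 0 < h) (hz : 0 < zeta <= 1) (hA : 0 <= sA2) (hc : 0 < scov2)
  (hPS : 0 < PS) (hN : (1 <= N)%nat) :
  forall P : R, 0 <= P ->
  forall RQ : R * R,
    C_DPS' N h P zeta sA2 scov2 PS RQ <-> C_OPS' N h P zeta sA2 scov2 PS RQ.
Proof.
  intros P HP RQ; split.
  - apply DPS_sub_OPS; lra || lia.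
  - apply OPS_sub_DPS; exact hN.
Qed.
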